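(* Let $L>0$, let $v_\textup{d}>0$ be a constant, and let $K:\mathbb{R}\to\mathbb{R}$ satisfy the following: the support of $K$ is $[0,R]$ with $0<R<L$; $K\in C^2(0,R)$ with $K,K''\in L^\infty(0,R)$; $K(z)>0$ and $K'(z)<0$ for $z\in(0,R)$; $K(0)=K(R)=0$ and $K(0^+):=\lim_{z\to0^+}K(z)>0$. Consider on the periodic domain $[0,L)$ the nonlocal conservation law \[ \partial_t\rho_t+\partial_x\Big(\rho_t\Big(v_\textup{d}-\int K(y-x)\rho_t(y)\,dy\Big)\Big)=0. \] Then every spatially homogeneous (constant) density $\rho_t(x)\equiv\bar\rho\ge0$ is a solution, and it is locally (i.e. linearly) stable and attractive: for the linearized equation around $\bar\rho$, every spatially periodic Fourier mode $e^{\sigma_k t+\mathbf{i}\frac{2\pi}{L}kx}$ with $k\in\mathbb{Z}\setminus\{0\}$ has $\operatorname{Re}(\sigma_k)<0$.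
   Context: $\mathbf{i}$ denotes the imaginary unit. For the constant solution the velocity is $v[\bar\rho]=v_\textup{d}-\bar\rho\int_0^RK(z)\,dz$. The constant mode $k=0$ is excluded since it corresponds to a constant-in-space perturbation. *)

From Stdlib Require Export Reals ZArith.
From Coquelicot Require Export Coquelicot.
Open Scope R_scope.

Definition Cexp (z : C) : C := (exp (Re z) * cos (Im z), exp (Re z) * sin (Im z)).

(* Densities are functions rho : time -> space -> R, defined on the whole line in
   space and L-periodic (this encodes the periodic domain [0,L)).
   The nonlocal term  \int K(y-x) rho(y) dy  over the periodic domain is the
   integral over one period starting at x: since supp K = [0,R] with R < L,
   K(y-x) for y in [x, x+L) is exactly the L-periodization of K. *)
Definition nl_int (L : R) (K : R -> R) (f : R -> R) (x : R) : R :=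
  RInt (fun y => K (y - x) * f y) x (x + L).

Definition L_periodic (L : R) (u : R -> R -> R) : Prop :=
  forall t x, u t (x + L) = u t x.

Definition is_solution (L vd : R) (K : R -> R) (rho : R -> R -> R) : Prop :=
  L_periodic L rho /\
  forall t x, exists dt dx : R,
    is_derive (fun s => rho s x) t dt /\
    is_derive (fun y => rho t y * (vd - nl_int L K (rho t) y)) x dx /\
    dt + dx = 0.

Definition lin_flux (L vd : R) (K : R -> R) (rhobar : R) (u : R -> R) (x : R) : R :=
  u x * (vd - rhobar * nl_int L K (fun _ => 1) x) - rhobar * nl_int L K u x.

Definition lin_solves (L vd : R) (K : R -> R) (rhobar : R) (u : R -> R -> R) : Prop :=
  L_periodic L u /\
  forall t x, exists dt dx : R,
    is_derive (fun s => u s x) t dt /\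
    is_derive (lin_flux L vd K rhobar (u t)) x dx /\
    dt + dx = 0.

(* A complex-valued function solves the (real-coefficient, real-linear)
   linearized equation iff its real and imaginary parts do (derivatives and
   integrals of C-valued functions are taken componentwise). *)
Definition lin_solves_C (L vd : R) (K : R -> R) (rhobar : R) (u : R -> R -> C) : Prop :=
  lin_solves L vd K rhobar (fun t x => Re (u t x)) /\
  lin_solves L vd K rhobar (fun t x => Im (u t x)).

Definition fourier_mode (L : R) (k : Z) (sigma : C) : R -> R -> C :=
  fun t x => Cexp (sigma * RtoC t + Ci * RtoC (2 * PI / L * IZR k * x))%C.

From Stdlib Require Import Lra Classical_Prop.

(* A constant density is a solution since its nonlocal term does not depend on x.
   Evaluating the linearized equation for the real part of a Fourier mode at
   t = x = 0 gives Re sigma = - rhobar c \int_0^L K(z) sin(c z) dz with c = 2 pi k / L.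
   Integrating by parts against the nonnegative antiderivative (1 - cos(c z)) / c of
   sin(c z) and using K' < 0 shows that c \int_0^L K(z) sin(c z) dz > 0.  Since K jumps
   at 0, the integration by parts is done for the continuous extension of K on (0, R),
   which exists because K is monotone there. *)

Lemma nondecreasing_of_derive_nonneg (f df : R -> R) (a b : R) :
  a <= b ->
  (forall x, a < x < b -> is_derive f x (df x)) ->
  (forall x, a <= x <= b -> continuity_pt f x) ->
  (forall x, a < x < b -> 0 <= df x) ->
  f a <= f b.
Proof.
  intros Hab Hf Hc Hdf.
  (* [MVT_gen] may return an endpoint, where [df] is not controlled. *)
  destruct (MVT_gen f a b (fun x => Rmax 0 (df x))) as [c [_ Hmvt]].
  - rewrite Rmin_left, Rmax_right by lra. intros x Hx.
    rewrite Rmax_right by (apply Hdf; lra). now apply Hf.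
  - rewrite Rmin_left, Rmax_right by lra. exact Hc.
  - pose proof (Rmax_l 0 (df c)). nra.
Qed.

Lemma increasing_of_derive_pos_near (f df : R -> R) (a c b : R) :
  a < c -> c <= b ->
  (forall x, a < x < b -> is_derive f x (df x)) ->
  (forall x, a <= x <= b -> continuity_pt f x) ->
  (forall x, a < x < b -> 0 <= df x) ->
  (forall x, a < x < c -> 0 < df x) ->
  f a < f b.
Proof.
  intros Hac Hcb Hf Hc Hdf Hpos.
  set (x := a + (c - a) / 3). set (y := a + 2 * (c - a) / 3).
  assert (Hx : f a <= f x).
  { apply (nondecreasing_of_derive_nonneg f df); unfold x; intros; try lra;
      [apply Hf | apply Hc | apply Hdf]; lra. }
  assert (Hy : f y <= f b).
  { apply (nondecreasing_of_derive_nonneg f df); unfold y; intros; try lra;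
      [apply Hf | apply Hc | apply Hdf]; lra. }
  assert (Hxy : f x < f y).
  { apply (incr_function f a c df); simpl; unfold x, y; intros; try lra;
      [apply Hf | apply Hpos]; lra. }
  lra.
Qed.

Lemma decreasing_of_Derive_neg (f : R -> R) (a b : R) :
  (forall x, a < x < b -> ex_derive f x) ->
  (forall x, a < x < b -> Derive f x < 0) ->
  forall x y, a < x -> x < y -> y < b -> f y < f x.
Proof.
  intros Hf Hdf x y Hx Hxy Hy.
  enough (- f x < - f y) by lra.
  apply (incr_function (fun z => - f z) a b (fun z => - Derive f z)); simpl; auto.
  - intros z Hz1 Hz2. apply (is_derive_opp f z (Derive f z)), Derive_correct, Hf; lra.
  - intros z Hz1 Hz2. specialize (Hdf z (conj Hz1 Hz2)). lra.
Qed.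

Lemma at_left_cvg_of_decreasing (f : R -> R) (a b : R) :
  a < b ->
  (forall x, a < x < b -> 0 <= f x) ->
  (forall x y, a < x -> x < y -> y < b -> f y < f x) ->
  exists l, 0 <= l /\ filterlim f (at_left b) (locally l).
Proof.
  intros Hab Hnn Hdec.
  set (E := fun y => exists z, a < z < b /\ y = - f z).
  assert (HE : bound E).
  { exists 0. intros y [z [Hz ->]]. specialize (Hnn z Hz). lra. }
  assert (Hinh : exists x, E x).
  { exists (- f ((a + b) / 2)), ((a + b) / 2). split; [lra | reflexivity]. }
  destruct (completeness E HE Hinh) as [m [Hub Hlub]].
  exists (- m). split.
  { enough (m <= 0) by lra. apply Hlub. intros y [z [Hz ->]].
    specialize (Hnn z Hz). lra. }
  intros P [eps HP].
  assert (Hz0 : exists z0, a < z0 < b /\ m - eps < - f z0).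
  { apply NNPP. intros Hn.
    enough (m <= m - eps) by (pose proof (cond_pos eps); lra).
    apply Hlub. intros y [z [Hz ->]]. apply Rnot_lt_le. intros Hlt.
    apply Hn. now exists z. }
  destruct Hz0 as [z0 [Hz0 Hlt]].
  exists (mkposreal (b - z0) ltac:(lra)). intros y Hy Hyb. apply HP.
  change (Rabs (y - b) < b - z0) in Hy. apply Rabs_def2 in Hy.
  assert (- f y <= m) by (apply Hub; exists y; split; [lra | reflexivity]).
  assert (f y <= f z0).
  { destruct (Req_dec y z0) as [-> | Hne]; [lra |]. left. apply Hdec; lra. }
  change (Rabs (f y - - m) < eps). rewrite Rabs_pos_eq; lra.
Qed.

Lemma continuous_extension_of_decreasing (f : R -> R) (b l0 : R) :
  0 < b ->
  (forall z, 0 < z < b -> 0 < f z) ->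
  (forall z, 0 < z < b -> ex_derive f z) ->
  (forall z, 0 < z < b -> Derive f z < 0) ->
  filterlim f (at_right 0) (locally l0) ->
  exists g : R -> R,
    (forall z, continuous g z) /\ (forall z, 0 < z < b -> g z = f z) /\
    (forall z, 0 < z < b -> ex_derive g z /\ Derive g z < 0) /\ 0 <= g b.
Proof.
  intros Hb Hpos Hdiff Hdec Hl0.
  destruct (at_left_cvg_of_decreasing f 0 b Hb) as [lb [Hlb Hcvg]].
  - intros z Hz. now apply Rlt_le, Hpos.
  - exact (decreasing_of_Derive_neg f 0 b Hdiff Hdec).
  - destruct (C0_extension_lt f l0 lb 0 b Hb) as [g [Hg [Hgf [_ Hgb]]]]; auto.
    { intros z Hz. apply (@ex_derive_continuous R_AbsRing R_NormedModule), Hdiff; lra. }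
    exists g. rewrite Hgb. split; [exact Hg |]. split; [exact Hgf |]. split; [| exact Hlb].
    intros z Hz.
    assert (Hloc : locally z (fun t => f t = g t)).
    { exists (mkposreal (Rmin z (b - z)) ltac:(apply Rmin_pos; lra)).
      intros t Ht. change (Rabs (t - z) < Rmin z (b - z)) in Ht. apply Rabs_def2 in Ht.
      pose proof (Rmin_l z (b - z)). pose proof (Rmin_r z (b - z)).
      symmetry. apply Hgf. lra. }
    split.
    + exact (ex_derive_ext_loc f g z Hloc (Hdiff z Hz)).
    + rewrite <- (Derive_ext_loc f g z Hloc). now apply Hdec.
Qed.

Lemma nl_int_shift (L : R) (K f : R -> R) (x : R) :
  ex_RInt (fun z => K z * f (z + x)) 0 L ->
  nl_int L K f x = RInt (fun z => K z * f (z + x)) 0 L.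
Proof.
  intros H. unfold nl_int.
  assert (H' : ex_RInt (fun z => K z * f (z + x)) (1 * x + - x) (1 * (x + L) + - x)).
  { now replace (1 * x + - x) with 0 by ring; replace (1 * (x + L) + - x) with L by ring. }
  pose proof (RInt_comp_lin _ 1 (- x) x (x + L) H') as Hlin.
  replace (1 * x + - x) with 0 in Hlin by ring.
  replace (1 * (x + L) + - x) with L in Hlin by ring.
  rewrite <- Hlin.
  apply RInt_ext. intros y _.
  change (K (y - x) * f y = 1 * (K (1 * y + - x) * f (1 * y + - x + x))).
  replace (1 * y + - x) with (y - x) by ring. replace (y - x + x) with y by ring. ring.
Qed.

Lemma is_derive_RInt_continuous (f : R -> R) (a t : R) :
  (forall z, continuous f z) -> is_derive (RInt f a) t (f t).
Proof.
  intros Hf. apply (is_derive_RInt f _ a t); auto.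
  exists (mkposreal 1 Rlt_0_1). intros u _.
  apply (@RInt_correct R_CompleteNormedModule), (@ex_RInt_continuous R_CompleteNormedModule).
  auto.
Qed.

Lemma one_sub_cos_div_pos (w z : R) :
  0 < w -> 0 < z < PI / w -> 0 < (1 - cos (w * z)) / w.
Proof.
  intros Hw Hz. apply Rdiv_lt_0_compat; auto.
  assert (w * z < PI).
  { apply (Rmult_lt_reg_r (/ w)); [now apply Rinv_0_lt_compat |].
    replace (w * z * / w) with z by (field; lra). exact (proj2 Hz). }
  pose proof (cos_decreasing_1 0 (w * z)) as Hcos. rewrite cos_0 in Hcos.
  enough (cos (w * z) < 1) by lra. apply Hcos; nra.
Qed.

Lemma RInt_mul_sin_pos (g : R -> R) (b w : R) :
  0 < b -> 0 < w ->
  (forall z, continuous g z) ->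
  (forall z, 0 < z < b -> ex_derive g z) ->
  (forall z, 0 < z < b -> Derive g z < 0) ->
  0 <= g b ->
  0 < RInt (fun z => g z * sin (w * z)) 0 b.
Proof.
  intros Hb Hw Hgc Hgd Hdec Hgb.
  set (f := fun z => g z * sin (w * z)).
  (* Integration by parts against the antiderivative [F >= 0] of [sin (w z)], vanishing at 0. *)
  set (F := fun z => (1 - cos (w * z)) / w).
  assert (HF : forall z, is_derive F z (sin (w * z))).
  { intros z. unfold F. auto_derive; auto. field. lra. }
  assert (HF0 : forall z, 0 <= F z).
  { intros z. pose proof (COS_bound (w * z)). apply Rdiv_le_0_compat; lra. }
  assert (Hfc : forall z, continuous f z).
  { intros z. apply (continuous_mult g (fun z => sin (w * z))); auto.
    apply (@ex_derive_continuous R_AbsRing R_NormedModule). auto_derive; auto. }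
  assert (HPhi : forall t, is_derive (RInt f 0) t (f t))
    by (intros t; now apply is_derive_RInt_continuous).
  set (Psi := fun t => RInt f 0 t - g t * F t).
  assert (HPsi : forall z, 0 < z < b -> is_derive Psi z (- Derive g z * F z)).
  { intros z Hz.
    assert (Hprod : is_derive (fun t => g t * F t) z (Derive g z * F z + g z * sin (w * z)))
      by (apply (is_derive_mult g F); [now apply Derive_correct, Hgd | apply HF | apply Rmult_comm]).
    replace (- Derive g z * F z) with (minus (f z) (Derive g z * F z + g z * sin (w * z))).
    - exact (is_derive_minus _ _ _ _ _ (HPhi z) Hprod).
    - unfold f. change (@eq R (g z * sin (w * z) - (Derive g z * F z + g z * sin (w * z)))
        (- Derive g z * F z)). ring. }
  assert (Hincr : Psi 0 < Psi b).
  { apply (increasing_of_derive_pos_near Psi (fun z => - Derive g z * F z) 0 (Rmin b (PI / w)) b).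
    - apply Rmin_pos; auto. apply Rdiv_lt_0_compat; [apply PI_RGT_0 | exact Hw].
    - apply Rmin_l.
    - exact HPsi.
    - intros z _. apply continuity_pt_filterlim, (continuous_minus (RInt f 0) (fun t => g t * F t)).
      + apply (@ex_derive_continuous R_AbsRing R_NormedModule). eexists; apply HPhi.
      + apply (continuous_mult g F); auto.
        apply (@ex_derive_continuous R_AbsRing R_NormedModule). eexists; apply HF.
    - intros z Hz. pose proof (Hdec z Hz). pose proof (HF0 z). nra.
    - intros z Hz. pose proof (Rmin_l b (PI / w)). pose proof (Rmin_r b (PI / w)).
      pose proof (Hdec z ltac:(lra)). assert (0 < F z) by (apply one_sub_cos_div_pos; lra). nra. }
  assert (HPsi0 : Psi 0 = 0).
  { unfold Psi, F. rewrite RInt_point, Rmult_0_r, cos_0.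
    change (@eq R (0 - g 0 * ((1 - 1) / w)) 0). field. lra. }
  pose proof (HF0 b). assert (0 <= g b * F b) by now apply Rmult_le_pos.
  rewrite HPsi0 in Hincr. unfold Psi in Hincr. lra.
Qed.

Lemma fourier_mode_Re (L : R) (k : Z) (sigma : C) (t x : R) :
  Re (fourier_mode L k sigma t x) =
  exp (Re sigma * t) * cos (Im sigma * t + 2 * PI / L * IZR k * x).
Proof.
  destruct sigma as [a b]. unfold fourier_mode, Cexp. simpl. f_equal; f_equal; ring.
Qed.

Section Kernel.

Variables (L Rk : R) (K g : R -> R).
Hypotheses (hR : 0 < Rk) (hRL : Rk < L).
Hypothesis K_supp : forall z, z < 0 \/ Rk < z -> K z = 0.
Hypothesis g_cont : forall z, continuous g z.
Hypothesis g_K : forall z, 0 < z < Rk -> g z = K z.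

Lemma is_RInt_kernel (phi : R -> R) :
  (forall z, continuous phi z) ->
  is_RInt (fun z => K z * phi z) 0 L (RInt (fun z => g z * phi z) 0 Rk).
Proof.
  intros Hphi.
  set (I := RInt (fun z => g z * phi z) 0 Rk).
  replace I with (plus I (scal (L - Rk) 0)) by (change (I + (L - Rk) * 0 = I); ring).
  apply (@is_RInt_Chasles R_NormedModule _ 0 Rk L).
  - apply (is_RInt_ext (fun z => g z * phi z)).
    + rewrite Rmin_left, Rmax_right by lra. intros z Hz. now rewrite g_K.
    + unfold I. apply (@RInt_correct R_CompleteNormedModule).
      apply (@ex_RInt_continuous R_CompleteNormedModule). intros z _.
      now apply (continuous_mult g phi).
  - apply (is_RInt_ext (fun _ => 0)); [| apply (@is_RInt_const R_NormedModule)].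
    rewrite Rmin_left, Rmax_right by lra. intros z Hz.
    rewrite K_supp by lra. symmetry. apply Rmult_0_l.
Qed.

Lemma ex_RInt_kernel (phi : R -> R) :
  (forall z, continuous phi z) -> ex_RInt (fun z => K z * phi z) 0 L.
Proof. intros Hphi. eexists. now apply is_RInt_kernel. Qed.

Lemma nl_int_const (c x : R) :
  nl_int L K (fun _ => c) x = RInt (fun z => K z * c) 0 L.
Proof.
  apply nl_int_shift, (ex_RInt_kernel (fun _ => c)). intros; apply continuous_const.
Qed.

Lemma nl_int_cos (w x : R) :
  nl_int L K (fun y => cos (w * y)) x =
  cos (w * x) * RInt (fun z => K z * cos (w * z)) 0 L
  - sin (w * x) * RInt (fun z => K z * sin (w * z)) 0 L.
Proof.
  assert (Hcos : ex_RInt (fun z => K z * cos (w * z)) 0 L).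
  { apply ex_RInt_kernel. intros z. apply (@ex_derive_continuous R_AbsRing R_NormedModule).
    auto_derive; auto. }
  assert (Hsin : ex_RInt (fun z => K z * sin (w * z)) 0 L).
  { apply ex_RInt_kernel. intros z. apply (@ex_derive_continuous R_AbsRing R_NormedModule).
    auto_derive; auto. }
  rewrite nl_int_shift.
  2:{ apply (ex_RInt_kernel (fun z => cos (w * (z + x)))). intros z.
      apply (@ex_derive_continuous R_AbsRing R_NormedModule). auto_derive; auto. }
  rewrite (RInt_ext _ (fun z => plus (scal (cos (w * x)) (K z * cos (w * z)))
                                     (scal (- sin (w * x)) (K z * sin (w * z))))).
  - rewrite (@RInt_plus R_CompleteNormedModule) by now apply (@ex_RInt_scal R_NormedModule).
    rewrite !(@RInt_scal R_CompleteNormedModule) by assumption.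
    change (@eq R (cos (w * x) * RInt (fun z => K z * cos (w * z)) 0 L
                   + - sin (w * x) * RInt (fun z => K z * sin (w * z)) 0 L)
      (cos (w * x) * RInt (fun z => K z * cos (w * z)) 0 L
       - sin (w * x) * RInt (fun z => K z * sin (w * z)) 0 L)). ring.
  - intros z _. replace (w * (z + x)) with (w * x + w * z) by ring. rewrite cos_plus.
    change (@eq R (K z * (cos (w * x) * cos (w * z) - sin (w * x) * sin (w * z)))
      (cos (w * x) * (K z * cos (w * z)) + - sin (w * x) * (K z * sin (w * z)))). ring.
Qed.

Lemma is_derive_lin_flux_cos (vd rhobar w : R) (u : R -> R) :
  (forall y, u y = cos (w * y)) ->
  is_derive (lin_flux L vd K rhobar u) 0
    (rhobar * w * RInt (fun z => K z * sin (w * z)) 0 L).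
Proof.
  intros Hu.
  apply (is_derive_ext (fun y => cos (w * y) * (vd - rhobar * RInt (fun z => K z * 1) 0 L)
      - rhobar * (cos (w * y) * RInt (fun z => K z * cos (w * z)) 0 L
                  - sin (w * y) * RInt (fun z => K z * sin (w * z)) 0 L))).
  - intros y. unfold lin_flux. rewrite nl_int_const, Hu, <- nl_int_cos.
    unfold nl_int. do 2 f_equal. apply RInt_ext. intros z _. now rewrite Hu.
  - auto_derive; auto. rewrite Rmult_0_r, cos_0, sin_0. ring.
Qed.

Lemma const_is_solution (vd rhobar : R) : is_solution L vd K (fun _ _ => rhobar).
Proof.
  split; [now intros t x |]. intros t x. exists 0, 0.
  split; [apply (@is_derive_const R_AbsRing R_NormedModule) |]. split; [| ring].
  apply (is_derive_ext (fun _ => rhobar * (vd - RInt (fun z => K z * rhobar) 0 L))).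
  - intros y. now rewrite nl_int_const.
  - apply (@is_derive_const R_AbsRing R_NormedModule).
Qed.

Lemma lin_solves_Re_fourier_mode (vd rhobar : R) (k : Z) (sigma : C) :
  lin_solves L vd K rhobar (fun t x => Re (fourier_mode L k sigma t x)) ->
  Re sigma = - rhobar * (2 * PI / L * IZR k
                         * RInt (fun z => K z * sin (2 * PI / L * IZR k * z)) 0 L).
Proof.
  set (w := 2 * PI / L * IZR k).
  intros [_ Hsol]. destruct (Hsol 0 0) as [dt [dx [Hdt [Hdx Hsum]]]].
  assert (Edt : dt = Re sigma).
  { rewrite <- (is_derive_unique _ _ _ Hdt). apply is_derive_unique.
    apply (is_derive_ext (fun s => exp (Re sigma * s) * cos (Im sigma * s + w * 0))).
    - intros s. now rewrite fourier_mode_Re.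
    - auto_derive; auto. rewrite !Rmult_0_r, Rplus_0_r, exp_0, cos_0, sin_0. ring. }
  assert (Edx : dx = rhobar * w * RInt (fun z => K z * sin (w * z)) 0 L).
  { rewrite <- (is_derive_unique _ _ _ Hdx). apply is_derive_unique, is_derive_lin_flux_cos.
    intros y. rewrite fourier_mode_Re, !Rmult_0_r, exp_0, Rplus_0_l. apply Rmult_1_l. }
  rewrite Edt, Edx in Hsum. lra.
Qed.

Hypothesis g_dec : forall z, 0 < z < Rk -> ex_derive g z /\ Derive g z < 0.
Hypothesis g_Rk : 0 <= g Rk.

Lemma RInt_kernel_sin_pos (w : R) :
  0 < w -> 0 < RInt (fun z => K z * sin (w * z)) 0 L.
Proof.
  intros Hw.
  rewrite (is_RInt_unique _ _ _ _ (is_RInt_kernel (fun z => sin (w * z)) ltac:(intros z;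
    apply (@ex_derive_continuous R_AbsRing R_NormedModule); auto_derive; auto))).
  apply RInt_mul_sin_pos; auto; intros z Hz; apply (g_dec z Hz).
Qed.

Lemma mul_RInt_kernel_sin_pos (w : R) :
  w <> 0 -> 0 < w * RInt (fun z => K z * sin (w * z)) 0 L.
Proof.
  intros Hw. destruct (Rlt_or_le 0 w) as [Hpos | Hneg].
  - pose proof (RInt_kernel_sin_pos w Hpos). nra.
  - assert (Hodd : RInt (fun z => K z * sin (w * z)) 0 L
                   = - RInt (fun z => K z * sin (- w * z)) 0 L).
    { rewrite <- (@RInt_opp R_CompleteNormedModule).
      - apply RInt_ext. intros z _. replace (- w * z) with (- (w * z)) by ring.
        rewrite sin_neg. change (@eq R (K z * sin (w * z)) (- (K z * - sin (w * z)))). ring.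
      - apply ex_RInt_kernel. intros z.
        apply (@ex_derive_continuous R_AbsRing R_NormedModule). auto_derive; auto. }
    pose proof (RInt_kernel_sin_pos (- w) ltac:(lra)). rewrite Hodd. nra.
Qed.

End Kernel.

Theorem mainTheorem2
  (L vd Rk : R) (K : R -> R)
  (hL : 0 < L) (hvd : 0 < vd) (hR : 0 < Rk) (hRL : Rk < L)
  (K_supp : forall z, z < 0 \/ Rk < z -> K z = 0)
  (K_pos : forall z, 0 < z < Rk -> 0 < K z)
  (K_C2 : forall z, 0 < z < Rk ->
            ex_derive K z /\ ex_derive (Derive K) z /\ continuous (Derive_n K 2) z)
  (K_bdd : exists M, forall z, 0 < z < Rk ->
            Rabs (K z) <= M /\ Rabs (Derive_n K 2 z) <= M)
  (K_dec : forall z, 0 < z < Rk -> Derive K z < 0)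
  (K_0 : K 0 = 0) (K_R : K Rk = 0)
  (K_0p : exists K0, 0 < K0 /\ filterlim K (at_right 0) (locally K0)) :
  forall rhobar : R, 0 <= rhobar ->
    is_solution L vd K (fun _ _ => rhobar) /\
    (0 < rhobar ->
     forall (k : Z) (sigma : C), k <> 0%Z ->
       lin_solves_C L vd K rhobar (fourier_mode L k sigma) ->
       Re sigma < 0).
Proof.
  intros rhobar _.
  destruct K_0p as [K0 [_ HK0]].
  destruct (continuous_extension_of_decreasing K Rk K0 hR K_pos
              (fun z Hz => proj1 (K_C2 z Hz)) K_dec HK0)
    as [g [g_cont [g_K [g_dec g_Rk]]]].
  split; [apply (const_is_solution L Rk K g hR hRL K_supp g_cont g_K) |].
  intros Hrho k sigma Hk [Hmode _].
  rewrite (lin_solves_Re_fourier_mode L Rk K g hR hRL K_supp g_cont g_K vd rhobar k sigma Hmode).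
  assert (Hw : 2 * PI / L * IZR k <> 0).
  { pose proof PI_RGT_0. apply not_0_IZR in Hk.
    apply Rmult_integral_contrapositive_currified; [| exact Hk].
    apply Rgt_not_eq, Rdiv_lt_0_compat; lra. }
  pose proof (mul_RInt_kernel_sin_pos L Rk K g hR hRL K_supp g_cont g_K g_dec g_Rk _ Hw).
  nra.
Qed.
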